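(* Let $h$ be a triangle center function. If the locus of $X_h$ over the 3-periodics of $E$ is an ellipse, then this ellipse is centered at the origin (the center of $E$) and its axes lie along the coordinate axes (the axes of $E$).
   Context: Fix real numbers $a>b>0$ and let $E$ be the ellipse $x^2/a^2+y^2/b^2=1$ (the elliptic billiard). A 3-periodic is a non-degenerate triangle $P_1P_2P_3$ with all vertices on $E$ such that at each vertex $P_j$ the normal line to $E$ at $P_j$ bisects the interior angle of the triangle at $P_j$. For a triangle $P_1P_2P_3$ let $s_1=|P_2P_3|$, $s_2=|P_3P_1|$, $s_3=|P_1P_2|$. A triangle center function is a function $h(x,y,z)$ that is homogeneous and bisymmetric ($h(x,y,z)=h(x,z,y)$). The associated triangle center is $X_h=\dfrac{p s_1P_1+q s_2P_2+r s_3P_3}{p s_1+q s_2+r s_3}$ with $p=h(s_1,s_2,s_3)$, $q=h(s_2,s_3,s_1)$, $r=h(s_3,s_1,s_2)$, defined when the denominator is nonzero. The locus of $X_h$ is the set of points $X_h(T)$ as $T$ ranges over all 3-periodics for which $X_h(T)$ is defined. *)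

From Stdlib Require Import Reals.
Open Scope R_scope.

Definition pt := (R * R)%type.

Definition dist (P Q : pt) : R :=
  sqrt ((fst P - fst Q) ^ 2 + (snd P - snd Q) ^ 2).

Definition cross (u v : pt) : R := fst u * snd v - snd u * fst v.

Definition vsub (P Q : pt) : pt := (fst P - fst Q, snd P - snd Q).

Definition on_ellipse (a b : R) (P : pt) : Prop :=
  fst P ^ 2 / a ^ 2 + snd P ^ 2 / b ^ 2 = 1.

(* outward normal direction of the ellipse at P (gradient / 2) *)
Definition ell_normal (a b : R) (P : pt) : pt := (fst P / a ^ 2, snd P / b ^ 2).

(* the interior angle bisector direction at vertex P between rays to Q and S:
   sum of the unit vectors from P towards Q and towards S *)
Definition bisector_dir (P Q S : pt) : pt :=
  (fst (vsub Q P) / dist Q P + fst (vsub S P) / dist S P,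
   snd (vsub Q P) / dist Q P + snd (vsub S P) / dist S P).

Definition nondegenerate (P1 P2 P3 : pt) : Prop :=
  cross (vsub P2 P1) (vsub P3 P1) <> 0.

(* the normal line at P bisects the interior angle at P (i.e. the normal
   line is parallel to the interior bisector through P) *)
Definition normal_bisects (a b : R) (P Q S : pt) : Prop :=
  cross (ell_normal a b P) (bisector_dir P Q S) = 0.

Definition periodic3 (a b : R) (P1 P2 P3 : pt) : Prop :=
  nondegenerate P1 P2 P3 /\
  on_ellipse a b P1 /\ on_ellipse a b P2 /\ on_ellipse a b P3 /\
  normal_bisects a b P1 P2 P3 /\
  normal_bisects a b P2 P3 P1 /\
  normal_bisects a b P3 P1 P2.

Definition triangle_center_function (h : R -> R -> R -> R) : Prop :=
  (exists k : R, forall t x y z, 0 < t -> 0 < x -> 0 < y -> 0 < z ->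
      h (t * x) (t * y) (t * z) = Rpower t k * h x y z) /\
  (forall x y z, 0 < x -> 0 < y -> 0 < z -> h x y z = h x z y).

Definition center_denom (h : R -> R -> R -> R) (P1 P2 P3 : pt) : R :=
  let s1 := dist P2 P3 in let s2 := dist P3 P1 in let s3 := dist P1 P2 in
  h s1 s2 s3 * s1 + h s2 s3 s1 * s2 + h s3 s1 s2 * s3.

Definition center_point (h : R -> R -> R -> R) (P1 P2 P3 : pt) : pt :=
  let s1 := dist P2 P3 in let s2 := dist P3 P1 in let s3 := dist P1 P2 in
  let p := h s1 s2 s3 in let q := h s2 s3 s1 in let r := h s3 s1 s2 in
  let d := p * s1 + q * s2 + r * s3 in
  ((p * s1 * fst P1 + q * s2 * fst P2 + r * s3 * fst P3) / d,
   (p * s1 * snd P1 + q * s2 * snd P2 + r * s3 * snd P3) / d).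

Definition locus (a b : R) (h : R -> R -> R -> R) (X : pt) : Prop :=
  exists P1 P2 P3, periodic3 a b P1 P2 P3 /\
    center_denom h P1 P2 P3 <> 0 /\ X = center_point h P1 P2 P3.

(* S is (the point set of) a non-degenerate ellipse: center (cx,cy),
   semi-axes p,q > 0, rotated by angle th *)
Definition is_ellipse (S : pt -> Prop) : Prop :=
  exists cx cy p q th, 0 < p /\ 0 < q /\
    forall X, S X <-> exists t,
      X = (cx + p * cos t * cos th - q * sin t * sin th,
           cy + p * cos t * sin th + q * sin t * cos th).

Definition is_centered_axis_ellipse (S : pt -> Prop) : Prop :=
  exists p q, 0 < p /\ 0 < q /\
    forall X, S X <-> fst X ^ 2 / p ^ 2 + snd X ^ 2 / q ^ 2 = 1.

(* The billiard, and hence its family of 3-periodics, is symmetric under both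
   reflections in the coordinate axes, and any triangle center commutes with
   these isometries, so the locus of X_h is invariant under them.  An ellipse
   {X | Q(X - c) = 1}, Q positive definite, that is symmetric about the origin
   has c = 0: the points c + v and c - v with Q(v) = 1 reflect to -2c - v and
   -2c + v, and the parallelogram law then forces Q(c) = 0.  A centered ellipse
   with a further mirror symmetry in the x-axis is either a circle or has one
   axis along that mirror, hence both along the coordinate axes. *)
From Pilot Require Import Defs.
From Stdlib Require Import Reals Lra Psatz.
Open Scope R_scope.

Definition scale_axes (sx sy : R) (X : pt) : pt := (sx * fst X, sy * snd X).

Lemma dist_scale_axes (sx sy : R) (P Q : pt) :
  sx * sx = 1 -> sy * sy = 1 ->
  Defs.dist (scale_axes sx sy P) (scale_axes sx sy Q) = Defs.dist P Q.
Proof.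
  intros Hx Hy; unfold Defs.dist, scale_axes; simpl.
  f_equal; transitivity (sx * sx * (fst P - fst Q) ^ 2 + sy * sy * (snd P - snd Q) ^ 2);
    [ring | rewrite Hx, Hy; ring].
Qed.

Lemma locus_scale_axes (a b sx sy : R) (h : R -> R -> R -> R) (X : pt) :
  (sx = 1 \/ sx = -1) -> (sy = 1 \/ sy = -1) ->
  locus a b h X -> locus a b h (scale_axes sx sy X).
Proof.
  intros Hx Hy [P1 [P2 [P3 [[Hn [E1 [E2 [E3 [B1 [B2 B3]]]]]] [Hd ->]]]]].
  exists (scale_axes sx sy P1), (scale_axes sx sy P2), (scale_axes sx sy P3).
  unfold periodic3, nondegenerate, on_ellipse, normal_bisects, center_denom,
    center_point, bisector_dir in *.
  rewrite !dist_scale_axes by (destruct Hx, Hy; subst; ring).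
  unfold cross, vsub, ell_normal, scale_axes in *; simpl in *.
  destruct Hx as [-> | ->], Hy as [-> | ->];
    (repeat split; [intro H; apply Hn; lra | lra .. | f_equal; field; assumption]).
Qed.

Lemma cos_sin_surj (al be : R) : al ^ 2 + be ^ 2 = 1 ->
  exists t, cos t = al /\ sin t = be.
Proof.
  intros H.
  assert (Hb : -1 <= al <= 1) by nra.
  assert (Hs : sqrt (1 - al²) = Rabs be).
  { replace (1 - al²) with (be²) by (unfold Rsqr; nra). apply sqrt_Rsqr_abs. }
  destruct (Rle_lt_dec 0 be) as [Hp | Hn].
  - exists (acos al). rewrite cos_acos, sin_acos, Hs by lra.
    split; [reflexivity |]. apply Rabs_right; lra.
  - exists (- acos al). rewrite cos_neg, sin_neg, cos_acos, sin_acos, Hs by lra.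
    split; [reflexivity |]. rewrite Rabs_left; lra.
Qed.

Lemma cos_sin_sq (t : R) : cos t ^ 2 + sin t ^ 2 = 1.
Proof. pose proof (sin2_cos2 t); unfold Rsqr in *; lra. Qed.

(* The quadratic form of an ellipse with semi-axes [p], [q], the first one
   making the angle [th] with the x-axis. *)
Definition rot_form (p q th : R) (v : pt) : R :=
  ((fst v * cos th + snd v * sin th) / p) ^ 2
  + ((snd v * cos th - fst v * sin th) / q) ^ 2.

Lemma is_ellipse_equation (S : pt -> Prop) : is_ellipse S ->
  exists c p q th, 0 < p /\ 0 < q /\
    forall X, S X <-> rot_form p q th (vsub X c) = 1.
Proof.
  intros [cx [cy [p [q [th [Hp [Hq HS]]]]]]].
  exists (cx, cy), p, q, th; do 2 (split; [assumption |]).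
  pose proof (cos_sin_sq th) as Hth.
  intros [x y]; rewrite HS; unfold rot_form, vsub; simpl; split.
  - intros [t Ht]; injection Ht as -> ->.
    pose proof (cos_sin_sq t).
    transitivity ((cos t ^ 2 + sin t ^ 2) * (cos th ^ 2 + sin th ^ 2) ^ 2);
      [field; lra | rewrite Hth, H; ring].
  - intros HX; destruct (cos_sin_surj _ _ HX) as [t [Hc Hs]]; exists t.
    rewrite Hc, Hs.
    f_equal; [transitivity (cx + (x - cx) * (cos th ^ 2 + sin th ^ 2))
             | transitivity (cy + (y - cy) * (cos th ^ 2 + sin th ^ 2))];
      solve [rewrite Hth; ring | field; lra].
Qed.

Section RotForm.

Variables p q th : R.
Hypothesis Hp : 0 < p.
Hypothesis Hq : 0 < q.

Lemma rot_form_major_vertex : rot_form p q th (p * cos th, p * sin th) = 1.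
Proof.
  unfold rot_form; simpl.
  transitivity ((cos th ^ 2 + sin th ^ 2) ^ 2); [field; lra | rewrite cos_sin_sq; ring].
Qed.

Lemma rot_form_parallelogram (x y u v : R) :
  rot_form p q th (x + u, y + v) + rot_form p q th (x - u, y - v)
  = 2 * rot_form p q th (x, y) + 2 * rot_form p q th (u, v).
Proof. unfold rot_form; cbn [fst snd]; field; lra. Qed.

Lemma rot_form_eq0 (x y : R) : rot_form p q th (x, y) = 0 -> (x, y) = (0, 0).
Proof.
  unfold rot_form; cbn [fst snd]; intros H.
  destruct (Rplus_sqr_eq_0 ((x * cos th + y * sin th) / p) ((y * cos th - x * sin th) / q))
    as [H1 H2]; [unfold Rsqr; rewrite <- H; ring |].
  apply (f_equal (Rmult p)) in H1; apply (f_equal (Rmult q)) in H2.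
  field_simplify in H1; [| lra]; field_simplify in H2; [| lra].
  pose proof (cos_sin_sq th) as Hth; f_equal.
  - transitivity (x * (cos th ^ 2 + sin th ^ 2)); [rewrite Hth; ring |].
    transitivity (cos th * (x * cos th + y * sin th) - sin th * (y * cos th - x * sin th));
      [ring | rewrite H1, H2; ring].
  - transitivity (y * (cos th ^ 2 + sin th ^ 2)); [rewrite Hth; ring |].
    transitivity (sin th * (x * cos th + y * sin th) + cos th * (y * cos th - x * sin th));
      [ring | rewrite H1, H2; ring].
Qed.

Lemma rot_form_symmetric_center (cx cy : R) :
  (forall X, rot_form p q th (vsub X (cx, cy)) = 1 ->
             rot_form p q th (vsub (scale_axes (-1) (-1) X) (cx, cy)) = 1) ->
  (cx, cy) = (0, 0).
Proof.
  intros Hsym.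
  set (wx := p * cos th); set (wy := p * sin th).
  assert (Hw : rot_form p q th (wx, wy) = 1) by apply rot_form_major_vertex.
  assert (Hplus : rot_form p q th (2 * cx + wx, 2 * cy + wy) = 1).
  { rewrite <- (Hsym (cx + wx, cy + wy)).
    - unfold rot_form, vsub, scale_axes; cbn [fst snd]; field; lra.
    - rewrite <- Hw; unfold rot_form, vsub; cbn [fst snd]; field; lra. }
  assert (Hminus : rot_form p q th (2 * cx - wx, 2 * cy - wy) = 1).
  { rewrite <- (Hsym (cx - wx, cy - wy)).
    - unfold rot_form, vsub, scale_axes; cbn [fst snd]; field; lra.
    - rewrite <- Hw; unfold rot_form, vsub; cbn [fst snd]; field; lra. }
  assert (Hdouble : rot_form p q th (2 * cx, 2 * cy) = 4 * rot_form p q th (cx, cy))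
    by (unfold rot_form; cbn [fst snd]; field; lra).
  pose proof (rot_form_parallelogram (2 * cx) (2 * cy) wx wy) as Hpar.
  rewrite Hplus, Hminus, Hw, Hdouble in Hpar.
  apply rot_form_eq0; lra.
Qed.

Lemma rot_form_mirror_axes :
  (forall X, rot_form p q th X = 1 -> rot_form p q th (scale_axes 1 (-1) X) = 1) ->
  exists P Q, 0 < P /\ 0 < Q /\
    forall X, rot_form p q th X = fst X ^ 2 / P ^ 2 + snd X ^ 2 / Q ^ 2.
Proof.
  intros Hsym.
  pose proof (cos_sin_sq th) as Hth.
  set (C := cos th) in *; set (Sn := sin th) in *.
  assert (Hmir := Hsym _ rot_form_major_vertex).
  unfold rot_form, scale_axes in Hmir; simpl in Hmir; fold C Sn in Hmir.
  (* The mirror image of the vertex is p (cos 2th, - sin 2th). *)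
  assert (Hcase : Sn * C = 0 \/ p ^ 2 = q ^ 2).
  { assert (Hk : 4 * (Sn * C) ^ 2 * (p ^ 2 - q ^ 2) = 0).
    { assert (E : (C ^ 2 - Sn ^ 2) ^ 2 + 4 * p ^ 2 * (Sn * C) ^ 2 / q ^ 2 = 1).
      { rewrite <- Hmir; field; lra. }
      assert (Hid : (C ^ 2 - Sn ^ 2) ^ 2 = 1 - 4 * (Sn * C) ^ 2)
        by (transitivity ((C ^ 2 + Sn ^ 2) ^ 2 - 4 * (Sn * C) ^ 2); [ring | rewrite Hth; ring]).
      rewrite Hid in E.
      replace (4 * (Sn * C) ^ 2 * (p ^ 2 - q ^ 2))
        with (q ^ 2 * ((1 - 4 * (Sn * C) ^ 2 + 4 * p ^ 2 * (Sn * C) ^ 2 / q ^ 2) - 1))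
        by (field; lra).
      rewrite E; ring. }
    destruct (Rmult_integral _ _ Hk) as [H | H]; [left; nra | right; lra]. }
  destruct Hcase as [Hsc | Hpq].
  - destruct (Rmult_integral _ _ Hsc) as [Hs | Hc].
    + exists p, q; do 2 (split; [assumption |]); intros [x y].
      unfold rot_form; cbn [fst snd]; fold C Sn; rewrite Hs in *.
      transitivity (x ^ 2 * C ^ 2 / p ^ 2 + y ^ 2 * C ^ 2 / q ^ 2);
        [field; lra | replace (C ^ 2) with 1 by lra; field; lra].
    + exists q, p; do 2 (split; [assumption |]); intros [x y].
      unfold rot_form; cbn [fst snd]; fold C Sn; rewrite Hc in *.
      transitivity (y ^ 2 * Sn ^ 2 / p ^ 2 + x ^ 2 * Sn ^ 2 / q ^ 2);
        [field; lra | replace (Sn ^ 2) with 1 by lra; field; lra].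
  - replace q with p in * by nra.
    exists p, p; do 2 (split; [assumption |]); intros [x y].
    unfold rot_form; cbn [fst snd]; fold C Sn.
    transitivity ((x ^ 2 + y ^ 2) * (C ^ 2 + Sn ^ 2) / p ^ 2);
      [field; lra | rewrite Hth; field; lra].
Qed.

End RotForm.

Lemma vsub_0r (X : pt) : vsub X (0, 0) = X.
Proof. destruct X; unfold vsub; simpl; f_equal; ring. Qed.

Theorem lemma3 (a b : R) (h : R -> R -> R -> R) :
  a > b -> b > 0 ->
  triangle_center_function h ->
  is_ellipse (locus a b h) ->
  is_centered_axis_ellipse (locus a b h).
Proof.
  intros _ _ _ Hell.
  destruct (is_ellipse_equation _ Hell) as [c [p [q [th [Hp [Hq HS]]]]]].
  destruct c as [cx cy].
  assert (Hc : (cx, cy) = (0, 0)).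
  { apply (rot_form_symmetric_center p q th Hp Hq).
    intros X HX; apply HS, locus_scale_axes, HS; auto; lra. }
  rewrite Hc in HS; setoid_rewrite vsub_0r in HS.
  destruct (rot_form_mirror_axes p q th Hp Hq) as [P [Q [HP [HQ Hform]]]].
  { intros X HX; apply HS, locus_scale_axes, HS; auto; lra. }
  exists P, Q; split; [assumption | split; [assumption |]].
  intros X; rewrite HS, Hform; tauto.
Qed.
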